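(* Assume the setup in the context, with the fine-tuning regime and local smoothness with radius $r\ge 2\sqrt{C}$. Let $0<\epsilon\le 1$ be such that $|\langle\tau_i,\tau_j\rangle|\le\epsilon\|\tau_i\|\|\tau_j\|$ for all $i\neq j$. Fix $i\in[T]$ and $\alpha_i\in[0,1]$, and let $\theta_{\mathrm{Neg},i}=\theta_0-\alpha_i\tau_i$. Then for every $j\in[T]$ with $j\neq i$, $$\mathcal{L}_j(\theta_{\mathrm{Neg},i})-\mathcal{L}_j(\theta_0)\le L_jC\Big(\frac{3}{2}+\epsilon\Big).$$
   Context: Setup: $\theta_0\in\mathbb{R}^d$ is a pretrained parameter vector; $\theta_1,\dots,\theta_T\in\mathbb{R}^d$ are fine-tuned parameters and $\tau_i:=\theta_i-\theta_0$ are task vectors. For each task $i$, $\mathcal{L}_i:\mathbb{R}^d\to\mathbb{R}$ is a differentiable loss (population risk). Norms are Euclidean. Fine-tuning regime: $\nabla\mathcal{L}_i(\theta_i)=0$ for all $i\in[T]$, and there is $C>0$ with $\|\tau_i\|^2\le C$ for all $i$. Local smoothness with radius $r>0$: for each $i$ there is $L_i\ge 0$ such that for all $\theta$ with $\|\theta-\theta_i\|\le r$, $\big|\mathcal{L}_i(\theta)-\mathcal{L}_i(\theta_i)-\langle\theta-\theta_i,\nabla\mathcal{L}_i(\theta_i)\rangle\big|\le\frac{L_i}{2}\|\theta-\theta_i\|^2$. *)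

From HB Require Import structures.
From mathcomp Require Import all_boot all_order all_algebra.
From mathcomp Require Import all_classical all_reals all_analysis.
Set Implicit Arguments. Unset Strict Implicit. Unset Printing Implicit Defensive.
Import Order.TTheory GRing.Theory Num.Theory.
Import numFieldNormedType.Exports.
Local Open Scope ring_scope.

Definition dotv {R : realType} {d : nat} (u v : 'rV[R]_d) : R :=
  \sum_(k < d) u ord0 k * v ord0 k.
Definition enorm {R : realType} {d : nat} (u : 'rV[R]_d) : R :=
  Num.sqrt (dotv u u).

(* Since theta_j is a stationary point of L_j, local smoothness bounds |L_j x - L_j theta_j|
   by L_j/2 |x - theta_j|^2 on the r-ball around theta_j.  Applying this at theta_0 (distance
   |tau_j|^2 <= C) and at theta_0 - alpha tau_i (squared distance
   alpha^2 |tau_i|^2 + 2 alpha <tau_i, tau_j> + |tau_j|^2 <= 2C(1 + eps)) and subtracting gives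
   L_j/2 (3C + 2 eps C).  Both squared distances are at most 4C <= r^2, which is where the
   hypothesis r >= 2 sqrt C enters. *)
From HB Require Import structures.
From mathcomp Require Import all_boot all_order all_algebra.
From mathcomp Require Import all_classical all_reals all_analysis.
From mathcomp Require Import ring lra.
Import Order.TTheory GRing.Theory Num.Theory.
Import numFieldNormedType.Exports.
Local Open Scope ring_scope.

Section EuclideanNorm.
Context {R : realType} {d : nat}.
Implicit Types (u v : 'rV[R]_d) (a : R).

Lemma dotv_ge0 u : 0 <= dotv u u.
Proof. by apply: sumr_ge0 => k _; rewrite -expr2 sqr_ge0. Qed.

Lemma enorm_ge0 u : 0 <= enorm u.
Proof. exact: sqrtr_ge0. Qed.

Lemma enorm_sqr u : enorm u ^+ 2 = dotv u u.
Proof. by rewrite sqr_sqrtr // dotv_ge0. Qed.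

Lemma enormN u : enorm (- u) = enorm u.
Proof.
by rewrite /enorm /dotv; congr Num.sqrt; apply: eq_bigr => k _; rewrite !mxE mulrNN.
Qed.

Lemma enorm_sqrZD a u v :
  enorm (a *: u + v) ^+ 2 = a ^+ 2 * enorm u ^+ 2 + 2 * a * dotv u v + enorm v ^+ 2.
Proof.
rewrite !enorm_sqr /dotv !mulr_sumr -!big_split /=; apply: eq_bigr => k _.
by rewrite !mxE; ring.
Qed.

Lemma enorm_le_radius {u C r} :
  enorm u ^+ 2 <= 4 * C -> 2 * Num.sqrt C <= r -> enorm u <= r.
Proof.
move=> hu hr; have u0 := enorm_ge0 u; have s0 := sqrtr_ge0 C.
have : 0 <= C by have := sqr_ge0 (enorm u); lra.
move=> /sqr_sqrtr hC; rewrite leNgt; apply/negP => hlt; nra.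
Qed.

Lemma enorm_sqrZD_le a u v C eps :
  0 <= a <= 1 -> 0 <= eps ->
  enorm u ^+ 2 <= C -> enorm v ^+ 2 <= C ->
  `|dotv u v| <= eps * enorm u * enorm v ->
  enorm (a *: u + v) ^+ 2 <= 2 * C * (1 + eps).
Proof.
move=> /andP[a0 a1] e0 hu hv huv; rewrite enorm_sqrZD.
have u0 := enorm_ge0 u; have v0 := enorm_ge0 v.
have uvC : enorm u * enorm v <= C by nra.
have dot_le : a * dotv u v <= eps * C.
  have dn := ler_norm (dotv u v); have n0 := normr_ge0 (dotv u v).
  have : eps * (enorm u * enorm v) <= eps * C by rewrite ler_wpM2l.
  have : a * dotv u v <= a * `|dotv u v| by rewrite ler_wpM2l.
  nra.
have au : a ^+ 2 * enorm u ^+ 2 <= C.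
  have : a ^+ 2 <= 1 by rewrite expr2; nra.
  have := sqr_ge0 (enorm u); nra.
lra.
Qed.

End EuclideanNorm.

Section StationaryPoint.
Context {R : realType} {d : nat}.
Context {f : 'rV[R]_d -> R} {xs : 'rV[R]_d} {L r : R}.
Hypothesis df0 : forall v, 'd f xs v = 0.
Hypothesis smooth : forall x, enorm (x - xs) <= r ->
  `|f x - f xs - 'd f xs (x - xs)| <= L / 2 * enorm (x - xs) ^+ 2.

Lemma stationary_sub_le {x y} : enorm (x - xs) <= r -> enorm (y - xs) <= r ->
  f x - f y <= L / 2 * (enorm (x - xs) ^+ 2 + enorm (y - xs) ^+ 2).
Proof.
move=> /smooth hx /smooth hy; rewrite !df0 !subr0 in hx hy.
have := ler_norm (f x - f xs); have := ler_norm (- (f y - f xs)); rewrite normrN.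
lra.
Qed.

End StationaryPoint.

Theorem mainTheorem7 (R : realType) (d T : nat)
  (theta0 : 'rV[R]_d) (theta : 'I_T -> 'rV[R]_d)
  (Loss : 'I_T -> 'rV[R]_d -> R) (Lc : 'I_T -> R) (C r eps : R) :
  (forall i x, differentiable (Loss i) x) ->
  (* fine-tuning regime: gradient of L_i vanishes at theta_i *)
  (forall i v, 'd (Loss i) (theta i) v = 0) ->
  0 < C ->
  (forall i, enorm (theta i - theta0) ^+ 2 <= C) ->
  (* local smoothness with radius r, constants L_i >= 0 *)
  0 < r ->
  (forall i, 0 <= Lc i) ->
  (forall i th, enorm (th - theta i) <= r ->
     `| Loss i th - Loss i (theta i) - 'd (Loss i) (theta i) (th - theta i) |
       <= Lc i / 2 * enorm (th - theta i) ^+ 2) ->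
  2 * Num.sqrt C <= r ->
  0 < eps -> eps <= 1 ->
  (forall i j, i != j ->
     `| dotv (theta i - theta0) (theta j - theta0) |
       <= eps * enorm (theta i - theta0) * enorm (theta j - theta0)) ->
  forall (i : 'I_T) (alpha : R), 0 <= alpha -> alpha <= 1 ->
  forall j : 'I_T, j != i ->
    Loss j (theta0 - alpha *: (theta i - theta0)) - Loss j theta0
      <= Lc j * C * (3 / 2 + eps).
Proof.
move=> _ df0 C0 tauC _ L0 smooth rC e0 e1 orth i a a0 a1 j ji.
set u := theta i - theta0; set v := theta j - theta0.
have distN : enorm (theta0 - a *: u - theta j) ^+ 2 <= 2 * C * (1 + eps).
  rewrite (_ : _ - _ = - (a *: u + v)); last by rewrite opprD opprB addrAC addrC.
  rewrite enormN; apply: enorm_sqrZD_le (ltW e0) (tauC i) (tauC j) _.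
    by rewrite a0 a1.
  by apply: orth; rewrite eq_sym.
have dist0 : enorm (theta0 - theta j) ^+ 2 <= C.
  by rewrite -opprB enormN tauC.
have epsC : eps * C <= C by rewrite ler_piMl // ltW.
have radN : enorm (theta0 - a *: u - theta j) <= r.
  by apply: (enorm_le_radius (C := C)) rC; lra.
have rad0 : enorm (theta0 - theta j) <= r.
  by apply: (enorm_le_radius (C := C)) rC; lra.
apply: le_trans (stationary_sub_le (df0 j) (smooth j) radN rad0) _.
have L2 : 0 <= Lc j / 2 by rewrite divr_ge0 ?L0.
rewrite (_ : _ * (3 / 2 + _) = Lc j / 2 * (2 * C * (1 + eps) + C)); last by field.
by rewrite ler_wpM2l // lerD.
Qed.
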